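(* Let $\Lambda\subset\mathbb{R}^d$ be a full-rank lattice, let $\Delta\in\mathbb{R}^d$, and let $P_\Delta=(\Lambda+\Delta)\cap[0,1)^d$. If $|P_\Delta|\ge 2$, then \[ \rho(P_{\Delta})\le \begin{cases} 2\sqrt{d}\, \rho(\Lambda) & \text{if } h(\Lambda)\ge 1/2,\\ (1+\sqrt{d})\,\rho(\Lambda) & \text{otherwise.}\end{cases} \]
   Context: For a finite point set $P\subset[0,1]^d$ with at least two points: covering radius $h(P)=\sup_{x\in[0,1]^d}\min_{y\in P}\|x-y\|_2$, separation radius $q(P)=\frac12\min_{x,y\in P,\,x\ne y}\|x-y\|_2$, mesh ratio $\rho(P)=h(P)/q(P)$. For a full-rank lattice $\Lambda\subset\mathbb{R}^d$: $h(\Lambda)=\sup_{x\in\mathbb{R}^d}\min_{y\in\Lambda}\|x-y\|_2$, $q(\Lambda)=\frac12\min_{x\in\Lambda\setminus\{0\}}\|x\|_2$, $\rho(\Lambda)=h(\Lambda)/q(\Lambda)$. *)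

From HB Require Import structures.
From mathcomp Require Import all_boot all_order all_algebra.
From mathcomp Require Import all_classical all_reals.
Set Implicit Arguments. Unset Strict Implicit. Unset Printing Implicit Defensive.
Import Order.TTheory GRing.Theory Num.Theory.
Local Open Scope classical_set_scope.
Local Open Scope ring_scope.

Section Defs.
Variables (R : realType) (d : nat).

Definition enorm (v : 'rV[R]_d) : R := Num.sqrt (\sum_(i < d) v ord0 i ^+ 2).

(* The lattice generated by the rows of B: { z B | z in Z^d }.
   It is full rank iff B \in unitmx. *)
Definition lattice (B : 'M[R]_d) : set 'rV[R]_d :=
  [set x | exists z : 'rV[int]_d, x = map_mx (fun k : int => k%:~R) z *m B].

Definition dist_to (S : set 'rV[R]_d) (x : 'rV[R]_d) : R :=
  inf [set enorm (x - y) | y in S].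

Definition cube01 : set 'rV[R]_d := [set x | forall i, 0 <= x ord0 i <= 1].

Definition cov_radius (P : set 'rV[R]_d) : R := sup [set dist_to P x | x in cube01].
Definition sep_radius (P : set 'rV[R]_d) : R :=
  inf [set r | exists x y, P x /\ P y /\ x <> y /\ r = enorm (x - y)] / 2.
Definition mesh_ratio (P : set 'rV[R]_d) : R := cov_radius P / sep_radius P.

Definition lat_cov_radius (B : 'M[R]_d) : R :=
  sup [set dist_to (lattice B) x | x in [set: 'rV[R]_d]].
Definition lat_sep_radius (B : 'M[R]_d) : R :=
  inf [set enorm x | x in lattice B `\ 0] / 2.
Definition lat_mesh_ratio (B : 'M[R]_d) : R := lat_cov_radius B / lat_sep_radius B.

Definition shifted_points (B : 'M[R]_d) (D : 'rV[R]_d) : set 'rV[R]_d :=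
  [set x | (exists y, lattice B y /\ x = y + D) /\ forall i, 0 <= x ord0 i < 1].

End Defs.

(* Differences of points of P_Δ are nonzero vectors of Λ, hence q(Λ) <= q(P_Δ),
   and q(Λ) > 0 because Λ = Z^d B is discrete.  For the covering radius: if
   h(Λ) >= 1/2, every point of P_Δ is within √d of every point of the cube.
   Otherwise, for h(Λ) < t <= 1/2, clamp x ∈ [0,1]^d into [t, 1-t]^d, which moves
   it by at most t√d; the translate Λ + Δ has a point within t of the clamped
   point, and that point lies in (0,1)^d, hence in P_Δ.  So h(P_Δ) <= (1+√d) t. *)
From HB Require Import structures.
From mathcomp Require Import all_boot all_order all_algebra.
From mathcomp Require Import all_classical all_reals.
From mathcomp Require Import ring lra.
Import Order.TTheory GRing.Theory Num.Theory.
Local Open Scope classical_set_scope.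
Local Open Scope ring_scope.
Set Implicit Arguments. Unset Strict Implicit.

Section EuclideanNorm.
Variables (R : realType) (d : nat).
Implicit Types v w : 'rV[R]_d.

Lemma enorm_ge0 v : 0 <= enorm v. Proof. exact: sqrtr_ge0. Qed.

Lemma sumsq_ge0 (a : 'I_d -> R) : 0 <= \sum_i a i ^+ 2.
Proof. by apply: sumr_ge0 => i _; exact: sqr_ge0. Qed.

Lemma sqr_enorm v : enorm v ^+ 2 = \sum_i v ord0 i ^+ 2.
Proof. by rewrite /enorm sqr_sqrtr // sumsq_ge0. Qed.

Lemma ler_sum_term (a : 'I_d -> R) i : (forall j, 0 <= a j) -> a i <= \sum_j a j.
Proof. by move=> a_ge0; rewrite (bigD1 i) //= lerDl; apply: sumr_ge0 => j _. Qed.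

Lemma normr_coord_le_enorm v i : `|v ord0 i| <= enorm v.
Proof.
rewrite -sqrtr_sqr /enorm; apply: ler_wsqrtr.
by apply: (ler_sum_term (a := fun j => v ord0 j ^+ 2)) => j; exact: sqr_ge0.
Qed.

Lemma enorm_le_sum_normr v : enorm v <= \sum_i `|v ord0 i|.
Proof.
have sum_ge0 : 0 <= \sum_i `|v ord0 i| by apply: sumr_ge0 => i _.
rewrite -(ger0_norm sum_ge0) -sqrtr_sqr /enorm; apply: ler_wsqrtr.
rewrite expr2 mulr_suml; apply: ler_sum => i _.
rewrite -real_normK ?num_real // expr2 ler_wpM2l //.
exact: (ler_sum_term (a := fun j => `|v ord0 j|)).
Qed.

Lemma enorm_le_sqrt_dim v a : 0 <= a -> (forall i, `|v ord0 i| <= a) ->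
  enorm v <= a * Num.sqrt d%:R.
Proof.
move=> a_ge0 va; rewrite -(ger0_norm a_ge0) -sqrtr_sqr -sqrtrM ?sqr_ge0 //.
apply: ler_wsqrtr.
have -> : a ^+ 2 * d%:R = \sum_(i < d) a ^+ 2 by rewrite sumr_const card_ord mulr_natr.
by apply: ler_sum => i _; rewrite -real_normK ?num_real // !expr2 ler_pM.
Qed.

Lemma cauchy_schwarz (a b : 'I_d -> R) :
  (\sum_i a i * b i) ^+ 2 <= (\sum_i a i ^+ 2) * (\sum_i b i ^+ 2).
Proof.
set A := \sum_i a i ^+ 2; set Bq := \sum_i b i ^+ 2; set C := \sum_i a i * b i.
have [Bq0|Bq_neq0] := eqVneq Bq 0.
  have b0 i : b i = 0.
    apply/eqP; rewrite -sqrf_eq0; move/eqP: Bq0; rewrite psumr_eq0 => [|j _].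
      by move=> /allP /(_ i (mem_index_enum _)) /implyP /(_ isT).
    exact: sqr_ge0.
  by rewrite /C big1 ?Bq0 ?expr0n ?mulr0 // => i _; rewrite b0 mulr0.
have Bq_gt0 : 0 < Bq by rewrite lt_def Bq_neq0 sumsq_ge0.
have lagrange : \sum_i (a i * Bq - C * b i) ^+ 2 = Bq * (A * Bq - C ^+ 2).
  transitivity (\sum_i (Bq ^+ 2 * a i ^+ 2 + (- (2 * Bq * C)) * (a i * b i)
                        + C ^+ 2 * b i ^+ 2)).
    by apply: eq_bigr => i _; ring.
  by rewrite !big_split /= -!mulr_sumr -/A -/Bq -/C; ring.
have : 0 <= Bq * (A * Bq - C ^+ 2) by rewrite -lagrange sumsq_ge0.
by rewrite pmulr_rge0 // subr_ge0 mulrC.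
Qed.

Lemma enormD_le v w : enorm (v + w) <= enorm v + enorm w.
Proof.
have sum_ge0 : 0 <= enorm v + enorm w by rewrite addr_ge0 // enorm_ge0.
rewrite -(ger0_norm sum_ge0) -sqrtr_sqr /enorm; apply: ler_wsqrtr.
rewrite -/(enorm v) -/(enorm w).
have -> : \sum_i (v + w) ord0 i ^+ 2 =
   \sum_i v ord0 i ^+ 2 + 2 * (\sum_i v ord0 i * w ord0 i) + \sum_i w ord0 i ^+ 2.
  by rewrite mulr_sumr -!big_split /=; apply: eq_bigr => i _; rewrite !mxE; ring.
rewrite -!sqr_enorm.
have : \sum_i v ord0 i * w ord0 i <= enorm v * enorm w.
  apply: le_trans (real_ler_norm (num_real _)) _.
  rewrite -sqrtr_sqr /enorm -sqrtrM ?sumsq_ge0 //.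
  exact/ler_wsqrtr/cauchy_schwarz.
by move=> ?; nra.
Qed.

Definition entry_abs_sum (M : 'M[R]_d) : R := \sum_j \sum_i `|M i j|.

Lemma entry_abs_sum_ge0 M : 0 <= entry_abs_sum M.
Proof. by apply: sumr_ge0 => j _; apply: sumr_ge0. Qed.

Lemma enorm_mulmx_le v (M : 'M[R]_d) : enorm (v *m M) <= enorm v * entry_abs_sum M.
Proof.
apply: le_trans (enorm_le_sum_normr _) _.
rewrite mulr_sumr; apply: ler_sum => j _; rewrite mxE mulr_sumr.
apply: le_trans (ler_norm_sum _ _ _) _; apply: ler_sum => i _.
by rewrite normrM ler_wpM2r // normr_coord_le_enorm.
Qed.

End EuclideanNorm.

Section Lattice.
Variables (R : realType) (d : nat) (B : 'M[R]_d).
Hypothesis B_unit : B \in unitmx.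

Local Notation introw z := (map_mx (fun k : int => k%:~R) z).

Lemma lattice0 : lattice B 0.
Proof. by exists 0; rewrite map_mx0 mul0mx. Qed.

Lemma latticeB x y : lattice B x -> lattice B y -> lattice B (x - y).
Proof.
move=> [z1 ->] [z2 ->]; exists (z1 - z2); rewrite -mulmxBl; congr (_ *m B).
by apply/matrixP => i j; rewrite !mxE intrB.
Qed.

Lemma lattice_enorm_ge x : lattice B x -> x != 0 ->
  1 <= enorm x * entry_abs_sum (invmx B).
Proof.
move=> [z ->] x_neq0.
have [i zi_neq0] : exists i, z ord0 i != 0.
  apply/existsP; apply: contraNT x_neq0; rewrite negb_exists => /forallP z0.
  apply/eqP; suff -> : z = 0 by rewrite map_mx0 mul0mx.
  by apply/matrixP => a b; rewrite ord1 mxE; apply/eqP/negbNE/z0.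
apply: le_trans (enorm_mulmx_le _ _) ; rewrite mulmxK //.
apply: le_trans (normr_coord_le_enorm _ i); rewrite mxE -intr_norm ler1z.
by rewrite -gtz0_ge1 normr_gt0.
Qed.

Lemma lattice_near x :
  exists2 y, lattice B y & enorm (x - y) <= Num.sqrt d%:R * entry_abs_sum B.
Proof.
set w := x *m invmx B.
pose z : 'rV[int]_d := \row_i Num.floor (w ord0 i).
exists (introw z *m B); first by exists z.
have -> : x - introw z *m B = (w - introw z) *m B by rewrite mulmxBl /w mulmxKV.
apply: le_trans (enorm_mulmx_le _ _) _; apply: ler_wpM2r; first exact: entry_abs_sum_ge0.
rewrite -[X in _ <= X]mul1r; apply: enorm_le_sqrt_dim => // i.
have -> : (w - introw z) ord0 i = w ord0 i - (Num.floor (w ord0 i))%:~R by rewrite !mxE.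
have := Rfloor_le (w ord0 i); have := lt_succ_Rfloor (w ord0 i).
by rewrite RfloorE => ? ?; rewrite ger0_norm; lra.
Qed.

End Lattice.

Section DistanceToSet.
Variables (R : realType) (d : nat) (S : set 'rV[R]_d).
Implicit Types x y : 'rV[R]_d.

Lemma dist_to_lbound x : has_lbound [set enorm (x - y) | y in S].
Proof. by exists 0 => _ [p _ <-]; exact: enorm_ge0. Qed.

Lemma dist_to_le x y : S y -> dist_to S x <= enorm (x - y).
Proof. by move=> Sy; apply: ge_inf; [exact: dist_to_lbound | exists y]. Qed.

Lemma dist_to_ge0 x : S !=set0 -> 0 <= dist_to S x.
Proof.
move=> [y Sy]; apply: lb_le_inf; first by exists (enorm (x - y)), y.
by move=> _ [p _ <-]; exact: enorm_ge0.
Qed.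

Lemma dist_to_ltP x t : S !=set0 -> dist_to S x < t ->
  exists2 y, S y & enorm (x - y) < t.
Proof.
move=> [y Sy] dist_lt.
have has_inf_dist : has_inf [set enorm (x - y) | y in S].
  by split; [exists (enorm (x - y)), y | exact: dist_to_lbound].
have eps_gt0 : 0 < t - dist_to S x by rewrite subr_gt0.
have [_ [p Sp <-]] := inf_adherent eps_gt0 has_inf_dist.
by rewrite /dist_to addrCA subrr addr0 => ?; exists p.
Qed.

End DistanceToSet.

Section LatticeRadii.
Variables (R : realType) (d : nat) (B : 'M[R]_d).
Hypothesis B_unit : B \in unitmx.

Lemma dist_to_lattice_le_cov x : dist_to (lattice B) x <= lat_cov_radius B.
Proof.
apply: ub_le_sup; last by exists x.
exists (Num.sqrt d%:R * entry_abs_sum B) => _ [y _ <-].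
by have [z Lz yz] := lattice_near B_unit y; exact: le_trans (dist_to_le _ Lz) yz.
Qed.

Lemma lat_cov_radius_ge0 : 0 <= lat_cov_radius B.
Proof.
apply: le_trans (dist_to_lattice_le_cov 0); apply: dist_to_ge0.
by exists 0; exact: lattice0.
Qed.

Lemma lat_sep_radius_gt0 : (lattice B `\ 0) !=set0 -> 0 < lat_sep_radius B.
Proof.
move=> [v Lv0]; have [Lv /eqP v_neq0] := Lv0; rewrite divr_gt0 //.
have K_gt0 : 0 < entry_abs_sum (invmx B).
  rewrite lt_def entry_abs_sum_ge0 andbT.
  by apply: contraTneq (lattice_enorm_ge B_unit Lv v_neq0) => ->; rewrite mulr0 ler10.
apply: (@lt_le_trans _ _ (entry_abs_sum (invmx B))^-1); first by rewrite invr_gt0.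
apply: lb_le_inf; first by exists (enorm v), v.
move=> _ [w [Lw /eqP w_neq0] <-]; rewrite -div1r ler_pdivrMr //.
exact: lattice_enorm_ge.
Qed.

Lemma lat_sep_radius_le (P : set 'rV[R]_d) :
  (forall x y, P x -> P y -> lattice B (x - y)) ->
  (exists x y, P x /\ P y /\ x <> y) ->
  lat_sep_radius B <= sep_radius P.
Proof.
move=> PL [x0 [y0 [Px0 [Py0 xy0]]]].
rewrite ler_wpM2r ?invr_ge0 ?ler0n //.
apply: lb_le_inf; first by exists (enorm (x0 - y0)), x0, y0.
move=> _ [x [y [Px [Py [xy ->]]]]]; apply: ge_inf.
  by exists 0 => _ [v _ <-]; exact: enorm_ge0.
exists (x - y) => //; split; first exact: PL.
by move=> /= /eqP; rewrite subr_eq0 => /eqP.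
Qed.

End LatticeRadii.

Section CoveringRadius.
Variables (R : realType) (d : nat).
Implicit Types (P : set 'rV[R]_d) (x y : 'rV[R]_d).

Lemma enorm_sub_cube01_le x y : cube01 x -> cube01 y -> enorm (x - y) <= Num.sqrt d%:R.
Proof.
move=> cx cy; rewrite -[X in _ <= X]mul1r; apply: enorm_le_sqrt_dim => // i.
by have := cx i; have := cy i; rewrite !mxE ler_norml => ? ?; lra.
Qed.

Lemma cube01_0 : @cube01 R d 0.
Proof. by move=> i; rewrite mxE lexx ler01. Qed.

Lemma cov_radius_le P c : (forall x, cube01 x -> dist_to P x <= c) -> cov_radius P <= c.
Proof.
move=> Pc; apply: ge_sup; first by exists (dist_to P 0), 0; first exact: cube01_0.
by move=> _ [x cx <-]; exact: Pc.
Qed.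

Lemma cov_radius_bounds P : P !=set0 -> P `<=` @cube01 R d ->
  0 <= cov_radius P <= Num.sqrt d%:R.
Proof.
move=> [y Py] Pcube.
have dist_le x : cube01 x -> dist_to P x <= Num.sqrt d%:R.
  by move=> cx; apply: le_trans (dist_to_le _ Py) (enorm_sub_cube01_le cx (Pcube _ Py)).
apply/andP; split.
  apply: le_trans (dist_to_ge0 0 (ex_intro _ y Py)) _.
  apply: ub_le_sup; last by exists 0; first exact: cube01_0.
  by exists (Num.sqrt d%:R) => _ [x cx <-]; exact: dist_le.
exact: cov_radius_le.
Qed.

Definition clamp (t : R) x : 'rV[R]_d := \row_i Num.min (Num.max (x ord0 i) t) (1 - t).

Lemma clamp_bounds t x i : t <= 1 - t -> t <= clamp t x ord0 i <= 1 - t.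
Proof. by move=> t_le; rewrite mxE le_min le_max lexx orbT t_le ge_min lexx orbT. Qed.

Lemma normr_sub_clamp_le t x i : 0 <= t -> t <= 1 - t -> cube01 x ->
  `|(x - clamp t x) ord0 i| <= t.
Proof.
move=> t_ge0 t_le cx; have := cx i; rewrite !mxE ler_norml /Num.min /Num.max.
by case: ifP; case: ifP => ? ? ?; lra.
Qed.

End CoveringRadius.

Section ShiftedPoints.
Variables (R : realType) (d : nat) (B : 'M[R]_d) (D : 'rV[R]_d).
Hypothesis B_unit : B \in unitmx.
Local Notation P := (shifted_points B D).

Lemma shifted_points_subr x y : P x -> P y -> lattice B (x - y).
Proof.
move=> [[a [La ->]] _] [[b [Lb ->]] _].
by rewrite opprD addrACA subrr addr0; exact: latticeB.
Qed.

Lemma shifted_points_cube01 : P `<=` @cube01 R d.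
Proof. by move=> x [_ xP] i; have /andP [? /ltW ->] := xP i; rewrite andbT. Qed.

Lemma dist_to_shifted_points_le t x : lat_cov_radius B < t -> t <= 1 / 2 ->
  cube01 x -> dist_to P x <= (1 + Num.sqrt d%:R) * t.
Proof.
move=> cov_lt t_le cx.
have t_gt0 : 0 < t by apply: le_lt_trans (lat_cov_radius_ge0 B_unit) cov_lt.
have t_le1 : t <= 1 - t by lra.
have [y Ly near_y] : exists2 y, lattice B y & enorm (clamp t x - D - y) < t.
  apply: dist_to_ltP; first by exists 0; exact: lattice0.
  exact: le_lt_trans (dist_to_lattice_le_cov B_unit _) cov_lt.
have near_yD : enorm (clamp t x - (y + D)) < t by rewrite opprD addrA addrAC.
have PyD : P (y + D).
  split; first by exists y.
  move=> i; have := clamp_bounds x i t_le1.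
  have := le_lt_trans (normr_coord_le_enorm _ i) near_yD.
  by rewrite !mxE ltr_norml => /andP [? ?] /andP [? ?]; apply/andP; split; lra.
apply: le_trans (dist_to_le _ PyD) _.
rewrite -(subrK (clamp t x) x) -addrA mulrDl mul1r [X in _ <= X]addrC.
apply: le_trans (enormD_le _ _) _; apply: lerD; last exact: ltW.
rewrite mulrC; apply: enorm_le_sqrt_dim => [|i]; first exact: ltW.
exact: normr_sub_clamp_le (ltW t_gt0) t_le1 cx.
Qed.

Lemma cov_radius_shifted_points_le : lat_cov_radius B < 1 / 2 ->
  cov_radius P <= (1 + Num.sqrt d%:R) * lat_cov_radius B.
Proof.
move=> cov_lt; apply: cov_radius_le => x cx.
(* Let t decrease to h(Λ) in the previous lemma. *)
rewrite -ler_pdivrMl ?ltr_pwDl ?sqrtr_ge0 //; apply/ler_addgt0Pr => e e_gt0.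
rewrite ler_pdivrMl ?ltr_pwDl ?sqrtr_ge0 //.
set t := Num.min (lat_cov_radius B + e) (1 / 2).
apply: le_trans (dist_to_shifted_points_le (t := t) _ _ cx) _.
- by rewrite lt_min ltrDl e_gt0 cov_lt.
- by rewrite ge_min lexx orbT.
- by rewrite ler_wpM2l ?addr_ge0 ?sqrtr_ge0 // ge_min lexx.
Qed.

End ShiftedPoints.
Unset Implicit Arguments. Set Strict Implicit.

Theorem mainTheorem4 (R : realType) (d : nat) (B : 'M[R]_d) (D : 'rV[R]_d) :
  B \in unitmx ->
  (exists x y, shifted_points B D x /\ shifted_points B D y /\ x <> y) ->
  mesh_ratio (shifted_points B D) <=
    (if 1 / 2 <= lat_cov_radius B
     then 2 * Num.sqrt (d%:R) * lat_mesh_ratio B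
     else (1 + Num.sqrt (d%:R)) * lat_mesh_ratio B).
Proof.
move=> B_unit two_points; set P := shifted_points B D.
have [x [y [Px [Py xy]]]] := two_points.
have Pne : P !=set0 by exists x.
have qL_gt0 : 0 < lat_sep_radius B.
  apply: lat_sep_radius_gt0 => //; exists (x - y); split.
    exact: shifted_points_subr Px Py.
  by move=> /= /eqP; rewrite subr_eq0 => /eqP.
have qL_le : lat_sep_radius B <= sep_radius P.
  exact: lat_sep_radius_le (@shifted_points_subr _ _ _ _) two_points.
have /andP [hP_ge0 hP_le] := cov_radius_bounds Pne (@shifted_points_cube01 _ _ _ _).
rewrite /mesh_ratio /lat_mesh_ratio !mulrA.
have qP_gt0 : 0 < sep_radius P by exact: lt_le_trans qL_le.
have inv_le : (sep_radius P)^-1 <= (lat_sep_radius B)^-1 by rewrite lef_pV2 ?posrE.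
apply: le_trans (ler_wpM2l hP_ge0 inv_le) _.
have qL_inv_ge0 : 0 <= (lat_sep_radius B)^-1 by rewrite invr_ge0 ltW.
case: ifPn => [hL_ge|hL_lt]; apply: ler_wpM2r => //.
  by apply: le_trans hP_le _; have := sqrtr_ge0 (d%:R : R); nra.
by apply: cov_radius_shifted_points_le B_unit _; rewrite ltNge.
Qed.
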